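(* Let $n\ge1$ and let $f_1,\ldots,f_n$ be Alpert multiwavelets of multiplicity $n$. Then there is a real constant $c_{n,0}$ with $c_{n,0}^{-2}=2\int_0^1 p_{n-1}(x)^2\,dx$ such that $f_n(x)=c_{n,0}\,p_{n-1}(x)$ for $x\in(0,1)$. If moreover $n\ge2$, there is a real constant $d_{n,0}$ with $d_{n,0}^{-2}=2\int_0^1 q_{n-1}(x)^2\,dx$ such that $f_{n-1}(x)=d_{n,0}\,q_{n-1}(x)$ for $x\in(0,1)$.
   Context: Alpert multiwavelets of multiplicity $n\in\mathbb{N}$: real functions $f_1,\ldots,f_n$ supported on $[-1,1]$ such that (i) the restriction of each $f_i$ to $(0,1)$ is a polynomial of degree at most $n-1$; (ii) $f_k(-t)=(-1)^{k+n-1}f_k(t)$ for $t\in(0,1)$; (iii) $\int_{-1}^1 f_i(t)f_j(t)\,dt=\delta_{i,j}$ for $1\le i,j\le n$; (iv) $\int_{-1}^1 f_k(t)t^i\,dt=0$ for $i=0,1,\ldots,k+n-2$. Pochhammer symbol: $(a)_0=1$, $(a)_n=a(a+1)\cdots(a+n-1)$; for real $a$ and integer $n\ge0$, $\binom{n+a}{n}:=\frac{(a+1)_n}{n!}$. Define $p_n(x)=\sum_{k=0}^n\binom nk\binom{n+\frac k2}{n}(-1)^{n-k}x^k$ and $q_n(x)=\sum_{k=0}^n\binom nk\binom{n+\frac{k-1}2}{n}(-1)^{n-k}x^k$. *)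

From Stdlib Require Import Reals Factorial Binomial.
Open Scope R_scope.

Fixpoint sumR (m : nat) (g : nat -> R) : R :=
  match m with
  | O => 0
  | S m' => sumR m' g + g m'
  end.

Fixpoint poch (a : R) (n : nat) : R :=
  match n with
  | O => 1
  | S n' => poch a n' * (a + INR n')
  end.

(* generalized binomial  binom(n+a, n) := (a+1)_n / n! *)
Definition gbinom (n : nat) (a : R) : R := poch (a + 1) n / INR (fact n).

Definition p_poly (n : nat) (x : R) : R :=
  sumR (S n) (fun k => C n k * gbinom n (INR k / 2) * (-1) ^ (n - k) * x ^ k).

Definition q_poly (n : nat) (x : R) : R :=
  sumR (S n) (fun k => C n k * gbinom n ((INR k - 1) / 2) * (-1) ^ (n - k) * x ^ k).

Definition RInt_eq (f : R -> R) (a b v : R) : Prop :=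
  exists pr : Riemann_integrable f a b, RiemannInt pr = v.

(* f 1, ..., f n are Alpert multiwavelets of multiplicity n
   (the values f 0, f (n+1), ... are irrelevant). *)
Definition Alpert (n : nat) (f : nat -> R -> R) : Prop :=
  (forall k t, (1 <= k <= n)%nat -> (t < -1 \/ 1 < t) -> f k t = 0) /\
  (forall k, (1 <= k <= n)%nat ->
     exists c : nat -> R, forall t, 0 < t < 1 -> f k t = sumR n (fun m => c m * t ^ m)) /\
  (forall k t, (1 <= k <= n)%nat -> 0 < t < 1 ->
     f k (- t) = (-1) ^ (k + n - 1) * f k t) /\
  (forall i j, (1 <= i <= n)%nat -> (1 <= j <= n)%nat ->
     RInt_eq (fun t => f i t * f j t) (-1) 1 (if Nat.eqb i j then 1 else 0)) /\
  (forall k i, (1 <= k <= n)%nat -> (i <= k + n - 2)%nat ->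
     RInt_eq (fun t => f k t * t ^ i) (-1) 1 0).

(* On (0,1) the wavelet f_k is a polynomial sum_(m <= N) a_m t^m with N = n - 1, and it has
   parity (-1)^e, where e = 1 for k = n and e = 0 for k = n - 1.  Hence the vanishing
   moments against t^(2j+e), j < N, read sum_m a_m / (m + 2j + e + 1) = 0.  This Cauchy
   system has a one-dimensional solution space, and the coefficients of p_(n-1), resp.
   q_(n-1), solve it: sum_k C(N,k) (-1)^(N-k) (k/2 + b)_N / (k + 2j + 2b) is the N-th
   finite difference of a polynomial of degree N - 1 in k.  Unit norm fixes the factor. *)

From Stdlib Require Import Reals Lra Lia Factorial.
From Coquelicot Require Import Coquelicot.
Open Scope R_scope.

Lemma sumR_ext m g h : (forall k, (k < m)%nat -> g k = h k) -> sumR m g = sumR m h.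
Proof.
  induction m as [|m IH]; intros Hgh; simpl; [reflexivity|].
  rewrite IH, Hgh; [reflexivity| lia | intros; apply Hgh; lia].
Qed.

Lemma sumR_plus m g h : sumR m (fun k => g k + h k) = sumR m g + sumR m h.
Proof. induction m; simpl; [lra|]. rewrite IHm; ring. Qed.

Lemma sumR_scal m c g : sumR m (fun k => c * g k) = c * sumR m g.
Proof. induction m; simpl; [lra|]. rewrite IHm; ring. Qed.

Lemma sumR_opp m g : sumR m (fun k => - g k) = - sumR m g.
Proof. induction m; simpl; [lra|]. rewrite IHm; ring. Qed.

Lemma sumR_mulr m g c : sumR m g * c = sumR m (fun k => g k * c).
Proof. induction m; simpl; [ring|]. rewrite <- IHm; ring. Qed.

Lemma sumR_recl m g : sumR (S m) g = g O + sumR m (fun k => g (S k)).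
Proof. induction m; simpl in *; [lra|]. rewrite IHm; ring. Qed.

Lemma INR_add_pos m s : 0 < s -> 0 < INR m + s.
Proof. pose proof (pos_INR m); lra. Qed.

Lemma cauchy_eliminate N (r : nat -> R) (s t : R) : 0 < s -> 0 < t ->
  (INR N + s) * sumR (S N) (fun m => r m / (INR m + s))
  - (INR N + t) * sumR (S N) (fun m => r m / (INR m + t))
  = (t - s) * sumR N (fun m => r m * (INR N - INR m) / (INR m + t) / (INR m + s)).
Proof.
  intros Hs Ht.
  rewrite <- !sumR_scal. unfold Rminus at 1. rewrite <- sumR_opp, <- sumR_plus. simpl.
  pose proof (INR_add_pos N s Hs). pose proof (INR_add_pos N t Ht).
  replace (_ * (r N / (INR N + s)) + - (_ * (r N / (INR N + t)))) with 0 by (field; lra).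
  rewrite Rplus_0_r. apply sumR_ext; intros m _.
  pose proof (INR_add_pos m s Hs). pose proof (INR_add_pos m t Ht).
  field; lra.
Qed.

Lemma cauchy_kernel_trivial N : forall (r s : nat -> R),
  (forall j, 0 < s j) ->
  (forall i j, (i < N)%nat -> (j < N)%nat -> s i = s j -> i = j) ->
  (forall j, (j < N)%nat -> sumR N (fun m => r m / (INR m + s j)) = 0) ->
  forall m, (m < N)%nat -> r m = 0.
Proof.
  induction N as [|N IH]; intros r s Hs Hinj Hsys; [lia|].
  (* Eliminating [r N] between equations [j] and [N] leaves a Cauchy system of size [N]. *)
  assert (Hlow : forall m, (m < N)%nat -> r m * (INR N - INR m) / (INR m + s N) = 0).
  { apply (IH _ s Hs); [intros i j Hi Hj E; apply Hinj; [lia|lia|exact E]|].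
    intros j Hj.
    assert (Hsj : s N - s j <> 0).
    { intros E. assert (N = j) by (apply Hinj; [lia|lia|lra]). lia. }
    apply (Rmult_eq_reg_l (s N - s j)); [|exact Hsj].
    rewrite <- cauchy_eliminate, !Hsys by (auto; lia). ring. }
  assert (Hr : forall m, (m < N)%nat -> r m = 0).
  { intros m Hm. specialize (Hlow m Hm).
    assert (INR m < INR N) by (apply lt_INR; exact Hm).
    pose proof (INR_add_pos m (s N) (Hs N)).
    replace (r m * (INR N - INR m) / (INR m + s N))
      with (r m * ((INR N - INR m) / (INR m + s N))) in Hlow by (field; lra).
    apply Rmult_integral in Hlow as [|Hz]; [assumption|].
    exfalso. unfold Rdiv in Hz. apply Rmult_integral in Hz as [|Hz]; [lra|].
    exact (Rinv_neq_0_compat (INR m + s N) ltac:(lra) Hz). }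
  intros m Hm. destruct (Nat.eq_dec m N) as [->|]; [|apply Hr; lia].
  specialize (Hsys O ltac:(lia)). simpl in Hsys.
  rewrite (sumR_ext N _ (fun _ => 0)) in Hsys by (intros k Hk; rewrite Hr by exact Hk; lra).
  assert (Hsum0 : sumR N (fun _ => 0) = 0) by (clear; induction N; simpl; lra).
  pose proof (INR_add_pos N (s O) (Hs O)).
  apply (Rmult_eq_reg_r (/ (INR N + s O))); [|apply Rinv_neq_0_compat; lra]. lra.
Qed.

Lemma cauchy_solutions_proportional N (a b s : nat -> R) :
  (forall j, 0 < s j) ->
  (forall i j, (i < N)%nat -> (j < N)%nat -> s i = s j -> i = j) ->
  b N <> 0 ->
  (forall j, (j < N)%nat -> sumR (S N) (fun m => a m / (INR m + s j)) = 0) ->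
  (forall j, (j < N)%nat -> sumR (S N) (fun m => b m / (INR m + s j)) = 0) ->
  forall m, (m <= N)%nat -> a m = a N / b N * b m.
Proof.
  intros Hs Hinj HbN Ha Hb.
  pose (c := a N / b N).
  assert (Hr : forall m, (m < N)%nat -> a m - c * b m = 0).
  { apply (cauchy_kernel_trivial N _ s Hs Hinj). intros j Hj.
    assert (Hfull : sumR (S N) (fun m => (a m - c * b m) / (INR m + s j)) = 0).
    { rewrite (sumR_ext _ _ (fun m => a m / (INR m + s j) + - c * (b m / (INR m + s j)))).
      - rewrite sumR_plus, sumR_scal, Ha, Hb by exact Hj. ring.
      - intros m _. pose proof (INR_add_pos m (s j) (Hs j)). field. lra. }
    simpl in Hfull. unfold c in Hfull.
    pose proof (INR_add_pos N (s j) (Hs j)).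
    replace ((a N - a N / b N * b N) / (INR N + s j)) with 0 in Hfull by (field; split; lra).
    unfold c; lra. }
  intros m Hm. destruct (Nat.eq_dec m N) as [->|].
  - field. exact HbN.
  - specialize (Hr m ltac:(lia)). fold c. lra.
Qed.

(* Polynomial functions of degree at most [d], generated in the product-of-affine-factors
   form in which they arise below; this avoids expanding [Q (x + 1)] binomially. *)
Inductive polyfun : nat -> (R -> R) -> Prop :=
| polyfun_const c : polyfun 0 (fun _ => c)
| polyfun_add d Q1 Q2 : polyfun d Q1 -> polyfun d Q2 -> polyfun d (fun x => Q1 x + Q2 x)
| polyfun_mul_lin d Q a b : polyfun d Q -> polyfun (S d) (fun x => Q x * (a * x + b))
| polyfun_weaken d Q : polyfun d Q -> polyfun (S d) Q
| polyfun_ext d Q Q' : polyfun d Q -> (forall x, Q x = Q' x) -> polyfun d Q'.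

Lemma polyfun0_const d Q : polyfun d Q -> d = O -> exists c, forall x, Q x = c.
Proof.
  induction 1 as [c| d Q1 Q2 _ IH1 _ IH2| | |d Q Q' _ IH HQ]; intros Hd; try discriminate.
  - exists c; reflexivity.
  - destruct (IH1 Hd) as [c1 H1], (IH2 Hd) as [c2 H2].
    exists (c1 + c2); intros x; rewrite H1, H2; reflexivity.
  - destruct (IH Hd) as [c Hc]. exists c; intros x; rewrite <- HQ; apply Hc.
Qed.

Lemma polyfun_scal d Q k : polyfun d Q -> polyfun d (fun x => k * Q x).
Proof.
  induction 1.
  - apply polyfun_const.
  - eapply polyfun_ext; [apply (polyfun_add _ _ _ IHpolyfun1 IHpolyfun2)|]; intros; simpl; ring.
  - eapply polyfun_ext; [apply (polyfun_mul_lin _ _ a b IHpolyfun)|]; intros; simpl; ring.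
  - apply polyfun_weaken; assumption.
  - eapply polyfun_ext; [apply IHpolyfun|]; intros x; simpl; rewrite H0; reflexivity.
Qed.

Lemma polyfun_shift d Q : polyfun d Q -> polyfun d (fun x => Q (x + 1)).
Proof.
  induction 1.
  - apply polyfun_const.
  - apply (polyfun_add _ _ _ IHpolyfun1 IHpolyfun2).
  - eapply polyfun_ext; [apply (polyfun_mul_lin _ _ a (a + b) IHpolyfun)|]; intros; simpl; ring.
  - apply polyfun_weaken; assumption.
  - eapply polyfun_ext; [apply IHpolyfun|]; intros x; simpl; rewrite H0; reflexivity.
Qed.

Lemma polyfun_delta d Q : polyfun d Q -> polyfun (pred d) (fun x => Q (x + 1) - Q x).
Proof.
  induction 1 as [c| | d Q a b HQ IH| d Q _ IH| d Q Q' _ IH HQ]; simpl.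
  - eapply polyfun_ext; [apply (polyfun_const 0)|]; intros; simpl; ring.
  - eapply polyfun_ext; [apply (polyfun_add _ _ _ IHpolyfun1 IHpolyfun2)|]; intros; simpl; ring.
  - destruct d as [|d].
    + destruct (polyfun0_const _ _ HQ eq_refl) as [c Hc].
      eapply polyfun_ext; [apply (polyfun_const (c * a))|]; intros; rewrite !Hc; ring.
    + eapply polyfun_ext;
        [apply (polyfun_add _ _ _ (polyfun_mul_lin _ _ a b IH)
                  (polyfun_scal _ _ a (polyfun_shift _ _ HQ)))|].
      intros; simpl; ring.
  - destruct d as [|d]; [exact IH|]. apply polyfun_weaken; exact IH.
  - eapply polyfun_ext; [apply IH|]; intros x; simpl; rewrite !HQ; reflexivity.
Qed.

Definition fdiff (N : nat) (Q : R -> R) : R :=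
  sumR (S N) (fun k => Binomial.C N k * (-1) ^ (N - k) * Q (INR k)).

Lemma fdiff_S N Q : fdiff (S N) Q = fdiff N (fun x => Q (x + 1)) - fdiff N Q.
Proof.
  unfold fdiff.
  rewrite (sumR_recl (S N)), (sumR_recl N (fun k => Binomial.C N k * (-1) ^ (N - k) * Q (INR k))).
  change (sumR (S N) ?g) with (sumR N g + g N).
  rewrite (sumR_ext N _ (fun k => Binomial.C N k * (-1) ^ (N - k) * Q (INR k + 1)
                        + - (Binomial.C N (S k) * (-1) ^ (N - S k) * Q (INR (S k))))).
  2:{ intros k Hk. rewrite <- pascal by exact Hk. rewrite S_INR.
      replace (S N - S k)%nat with (S (N - S k)) by lia.
      replace (N - k)%nat with (S (N - S k)) by lia. simpl. ring. }
  rewrite sumR_plus, sumR_opp, !C_n_0, !C_n_n, !Nat.sub_diag, !Nat.sub_0_r, S_INR.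
  simpl. ring.
Qed.

Lemma fdiff_polyfun N : forall d Q, polyfun d Q -> (d < N)%nat -> fdiff N Q = 0.
Proof.
  induction N as [|N IH]; intros d Q HQ Hd; [lia|].
  rewrite fdiff_S. destruct N as [|N].
  - destruct (polyfun0_const _ _ HQ ltac:(lia)) as [c Hc].
    unfold fdiff; simpl. rewrite !Hc; ring.
  - assert (E := IH _ _ (polyfun_delta _ _ HQ) ltac:(lia)).
    unfold fdiff in *. rewrite <- E. unfold Rminus. rewrite <- sumR_opp, <- sumR_plus.
    apply sumR_ext; intros; ring.
Qed.

Fixpoint poch_omit (a : R) (N j : nat) : R :=
  match N with
  | O => 1
  | S N' => poch_omit a N' j * (if Nat.eqb N' j then 1 else a + INR N')
  end.

Lemma poch_omit_large a N j : (N <= j)%nat -> poch_omit a N j = poch a N.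
Proof.
  induction N as [|N IH]; intros HN; simpl; [reflexivity|].
  destruct (Nat.eqb_spec N j); [lia|]. rewrite IH by lia. reflexivity.
Qed.

Lemma poch_factor a N j : (j < N)%nat -> poch a N = (a + INR j) * poch_omit a N j.
Proof.
  induction N as [|N IH]; intros Hj; [lia|]. simpl.
  destruct (Nat.eqb_spec N j) as [->|].
  - rewrite poch_omit_large by lia. ring.
  - rewrite IH by lia. ring.
Qed.

Lemma polyfun_poch_omit_le b N j : polyfun N (fun x => poch_omit (/2 * x + b) N j).
Proof.
  induction N as [|N IH]; simpl; [apply polyfun_const|].
  destruct (Nat.eqb N j).
  - apply polyfun_weaken. eapply polyfun_ext; [exact IH|]. intros; simpl; ring.
  - eapply polyfun_ext; [apply (polyfun_mul_lin _ _ (/2) (b + INR N) IH)|]. intros; simpl; ring.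
Qed.

Lemma polyfun_poch_omit b N j : (j < N)%nat ->
  polyfun (N - 1) (fun x => poch_omit (/2 * x + b) N j).
Proof.
  induction N as [|N IH]; intros Hj; [lia|]. simpl.
  destruct (Nat.eqb_spec N j) as [->|].
  - rewrite Nat.sub_0_r.
    eapply polyfun_ext; [apply (polyfun_poch_omit_le b j j)|]. intros; simpl; ring.
  - replace (N - 0)%nat with (S (N - 1)) by lia.
    eapply polyfun_ext; [apply (polyfun_mul_lin _ _ (/2) (b + INR N) (IH ltac:(lia)))|].
    intros; simpl; ring.
Qed.

(* Dividing [(k/2 + b)_N] by [k + 2(j + b)] cancels one of its factors and leaves
   a polynomial in [k] of degree [N - 1], which the [N]-th difference kills. *)
Lemma gbinom_cauchy_moment N j b : (j < N)%nat -> 0 < b ->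
  sumR (S N) (fun k => Binomial.C N k * gbinom N (INR k / 2 + b - 1) * (-1) ^ (N - k)
                       / (INR k + 2 * (INR j + b))) = 0.
Proof.
  intros Hj Hb.
  pose (Q x := / (2 * INR (fact N)) * poch_omit (/2 * x + b) N j).
  rewrite <- (fdiff_polyfun N _ Q (polyfun_scal _ _ _ (polyfun_poch_omit b N j Hj)) ltac:(lia)).
  apply sumR_ext; intros k _. unfold Q, gbinom.
  replace (INR k / 2 + b - 1 + 1) with (/2 * INR k + b) by field.
  rewrite (poch_factor _ N j Hj).
  pose proof (INR_add_pos k (2 * (INR j + b)) ltac:(pose proof (pos_INR j); lra)).
  pose proof (INR_fact_neq_0 N).
  field. lra.
Qed.

Lemma gbinom_pos N a : -1 < a -> 0 < gbinom N a.
Proof.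
  intros Ha. unfold gbinom. apply Rdiv_lt_0_compat; [|apply lt_0_INR, lt_O_fact].
  induction N as [|N IH]; simpl; [lra|].
  apply Rmult_lt_0_compat; [exact IH|]. pose proof (pos_INR N); lra.
Qed.

Definition p_coef (N k : nat) : R :=
  Binomial.C N k * gbinom N (INR k / 2) * (-1) ^ (N - k).

Definition q_coef (N k : nat) : R :=
  Binomial.C N k * gbinom N ((INR k - 1) / 2) * (-1) ^ (N - k).

Lemma p_coef_moment N j : (j < N)%nat ->
  sumR (S N) (fun m => p_coef N m / INR (S (m + (2 * j + 1)))) = 0.
Proof.
  intros Hj. rewrite <- (gbinom_cauchy_moment N j 1 Hj ltac:(lra)).
  apply sumR_ext; intros m _. unfold p_coef.
  replace (INR m / 2 + 1 - 1) with (INR m / 2) by ring.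
  rewrite S_INR, !plus_INR, mult_INR. simpl. f_equal. ring.
Qed.

Lemma q_coef_moment N j : (j < N)%nat ->
  sumR (S N) (fun m => q_coef N m / INR (S (m + 2 * j))) = 0.
Proof.
  intros Hj. rewrite <- (gbinom_cauchy_moment N j (/2) Hj ltac:(lra)).
  apply sumR_ext; intros m _. unfold q_coef.
  replace (INR m / 2 + / 2 - 1) with ((INR m - 1) / 2) by field.
  rewrite S_INR, plus_INR, mult_INR. simpl. f_equal. field.
Qed.

Lemma p_coef_lead N : p_coef N N <> 0.
Proof.
  unfold p_coef. rewrite C_n_n, Nat.sub_diag.
  pose proof (gbinom_pos N (INR N / 2) ltac:(pose proof (pos_INR N); lra)). simpl; lra.
Qed.

Lemma q_coef_lead N : q_coef N N <> 0.
Proof.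
  unfold q_coef. rewrite C_n_n, Nat.sub_diag.
  pose proof (gbinom_pos N ((INR N - 1) / 2) ltac:(pose proof (pos_INR N); lra)). simpl; lra.
Qed.

Lemma is_RInt_monomial d p : is_RInt (fun t => d * t ^ p) 0 1 (d / INR (S p)).
Proof.
  assert (Hp : INR (S p) <> 0) by (apply not_0_INR; lia).
  replace (d / INR (S p)) with (minus (d * 1 ^ S p / INR (S p)) (d * 0 ^ S p / INR (S p)))
    by (rewrite pow1, pow_i by lia; unfold minus, plus, opp; simpl; field; exact Hp).
  apply (is_RInt_derive (fun t => d * t ^ S p / INR (S p))).
  - intros x _. auto_derive; [exact I|].
    change (match p with O => 1 | S _ => INR p + 1 end) with (INR (S p)). field. exact Hp.
  - intros x _. apply (ex_derive_continuous (fun t => d * t ^ p)). auto_derive. exact I.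
Qed.

Lemma is_RInt_poly_shift (a : nat -> R) M i :
  is_RInt (fun t => sumR M (fun m => a m * t ^ (m + i))) 0 1
          (sumR M (fun m => a m / INR (S (m + i)))).
Proof.
  induction M as [|M IH]; simpl.
  - assert (E : @scal R_AbsRing R_NormedModule (1 - 0) 0 = 0)
      by (unfold scal; simpl; unfold mult; simpl; ring).
    rewrite <- E at 2. apply is_RInt_const.
  - exact (is_RInt_plus _ _ 0 1 _ _ IH (is_RInt_monomial (a M) (M + i))).
Qed.

Lemma ex_derive_poly (a : nat -> R) M x : ex_derive (fun t => sumR M (fun m => a m * t ^ m)) x.
Proof.
  induction M as [|M IH]; simpl; [apply ex_derive_const|].
  apply (ex_derive_plus _ _ _ IH), ex_derive_scal, ex_derive_pow, ex_derive_id.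
Qed.

Lemma RInt_even (g : R -> R) : ex_RInt g (-1) 1 ->
  (forall t, 0 < t < 1 -> g (- t) = g t) -> RInt g (-1) 1 = 2 * RInt g 0 1.
Proof.
  intros Hg Heven.
  assert (Hl : ex_RInt g (-1) 0) by (apply (ex_RInt_Chasles_1 g (-1) 0 1); [lra|exact Hg]).
  assert (Hr : ex_RInt g 0 1) by (apply (ex_RInt_Chasles_2 g (-1) 0 1); [lra|exact Hg]).
  rewrite <- (RInt_Chasles g (-1) 0 1 Hl Hr).
  assert (Hneg : RInt g 0 (-1) = - RInt g 0 1).
  { assert (Hex : ex_RInt g (-1 * 0 + 0) (-1 * 1 + 0)).
    { replace (-1 * 0 + 0) with 0 by ring. replace (-1 * 1 + 0) with (-1) by ring.
      apply ex_RInt_swap, Hl. }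
    transitivity (RInt g (-1 * 0 + 0) (-1 * 1 + 0)); [f_equal; ring|].
    assert (Eopp := RInt_opp g 0 1 Hr). unfold opp in Eopp; simpl in Eopp.
    rewrite <- (RInt_comp_lin g (-1) 0 0 1 Hex), <- Eopp.
    apply RInt_ext. intros x Hx. rewrite Rmin_left, Rmax_right in Hx by lra.
    replace (-1 * x + 0) with (- x) by ring. rewrite Heven by exact Hx.
    unfold scal; simpl; unfold mult; simpl. ring. }
  rewrite <- (opp_RInt_swap g 0 (-1)) by (apply ex_RInt_swap, Hl).
  rewrite Hneg. unfold plus, opp; simpl. ring.
Qed.

Lemma RInt_eq_even g v : RInt_eq g (-1) 1 v ->
  (forall t, 0 < t < 1 -> g (- t) = g t) -> v = 2 * RInt g 0 1.
Proof.
  intros [pr Hv] Heven. rewrite <- Hv, <- RInt_Reals.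
  apply RInt_even; [apply ex_RInt_Reals_1; exact pr | exact Heven].
Qed.

Lemma symmetric_poly_moment (g : R -> R) (a : nat -> R) M s i v :
  (forall t, 0 < t < 1 -> g t = sumR M (fun m => a m * t ^ m)) ->
  (forall t, 0 < t < 1 -> g (- t) = s * g t) ->
  s * (-1) ^ i = 1 ->
  RInt_eq (fun t => g t * t ^ i) (-1) 1 v ->
  v = 2 * sumR M (fun m => a m / INR (S (m + i))).
Proof.
  intros Hg Hs Hsi Hv.
  rewrite (RInt_eq_even _ _ Hv).
  2:{ intros t Ht. rewrite Hs by exact Ht.
      replace (- t) with (-1 * t) by ring. rewrite Rpow_mult_distr.
      transitivity (s * (-1) ^ i * (g t * t ^ i)); [ring|]. rewrite Hsi; ring. }
  f_equal. rewrite <- (is_RInt_unique _ _ _ _ (is_RInt_poly_shift a M i)).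
  apply RInt_ext. intros x Hx. rewrite Rmin_left, Rmax_right in Hx by lra.
  rewrite Hg by exact Hx. rewrite sumR_mulr.
  apply sumR_ext; intros m _. rewrite pow_add; ring.
Qed.

Lemma symmetric_normalization (g P : R -> R) c s :
  (forall t, 0 < t < 1 -> g t = c * P t) ->
  (forall t, 0 < t < 1 -> g (- t) = s * g t) ->
  s * s = 1 ->
  (forall x, ex_derive P x) ->
  RInt_eq (fun t => g t * g t) (-1) 1 1 ->
  exists I, RInt_eq (fun x => P x ^ 2) 0 1 I /\ / (c ^ 2) = 2 * I.
Proof.
  intros Hg Hs Hss HP Hnorm.
  assert (HexP : ex_RInt (fun x => P x ^ 2) 0 1).
  { apply (ex_RInt_continuous (V := R_CompleteNormedModule)). intros x _.
    apply (ex_derive_continuous (fun x => P x ^ 2)), ex_derive_pow, HP. }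
  exists (RInt (fun x => P x ^ 2) 0 1). split.
  { exists (ex_RInt_Reals_0 _ _ _ HexP). rewrite <- RInt_Reals. reflexivity. }
  assert (H1 : 1 = 2 * RInt (fun t => g t * g t) 0 1).
  { apply (RInt_eq_even _ _ Hnorm). intros t Ht. rewrite Hs by exact Ht.
    transitivity (s * s * (g t * g t)); [ring|]. rewrite Hss; ring. }
  rewrite (RInt_ext _ (fun x => scal (c ^ 2) (P x ^ 2))), (RInt_scal _ _ _ _ HexP) in H1.
  - change (scal ?k ?y) with (k * y) in H1.
    assert (c ^ 2 <> 0) by (intros Hc; rewrite Hc, Rmult_0_l in H1; lra).
    apply (Rmult_eq_reg_l (c ^ 2)); [|assumption]. rewrite Rinv_r by assumption. lra.
  - intros x Hx. rewrite Rmin_left, Rmax_right in Hx by lra. rewrite Hg by exact Hx.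
    unfold scal; simpl; unfold mult; simpl. ring.
Qed.

Lemma neg1_pow_even_add k e : (-1) ^ (2 * k + e) = (-1) ^ e.
Proof. rewrite pow_add, pow_mult. replace ((-1) ^ 2) with 1 by ring. rewrite pow1; ring. Qed.

Lemma neg1_pow_sq e : (-1) ^ e * (-1) ^ e = 1.
Proof. rewrite <- Rpow_mult_distr. replace (-1 * -1) with 1 by ring. apply pow1. Qed.

(* By parity only the moments against [t^(2j+e)] carry information; they form a Cauchy
   system for the coefficients of [g], and [r] is any nonzero solution of it. *)
Lemma symmetric_profile N e (g : R -> R) (a r : nat -> R) :
  (forall t, 0 < t < 1 -> g t = sumR (S N) (fun m => a m * t ^ m)) ->
  (forall t, 0 < t < 1 -> g (- t) = (-1) ^ e * g t) ->
  (forall j, (j < N)%nat -> RInt_eq (fun t => g t * t ^ (2 * j + e)) (-1) 1 0) ->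
  RInt_eq (fun t => g t * g t) (-1) 1 1 ->
  r N <> 0 ->
  (forall j, (j < N)%nat -> sumR (S N) (fun m => r m / INR (S (m + (2 * j + e)))) = 0) ->
  exists c I,
    RInt_eq (fun x => (sumR (S N) (fun m => r m * x ^ m)) ^ 2) 0 1 I /\
    / (c ^ 2) = 2 * I /\
    forall x, 0 < x < 1 -> g x = c * sumR (S N) (fun m => r m * x ^ m).
Proof.
  intros Hg Hpar Hmom Hnorm HrN Hr.
  pose (shift j := INR (2 * j + e) + 1).
  assert (Hcauchy : forall b : nat -> R,
    (forall j, (j < N)%nat -> sumR (S N) (fun m => b m / INR (S (m + (2 * j + e)))) = 0) ->
    forall j, (j < N)%nat -> sumR (S N) (fun m => b m / (INR m + shift j)) = 0).
  { intros b Hb j Hj. rewrite <- (Hb j Hj). apply sumR_ext; intros m _.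
    unfold shift. rewrite S_INR, (plus_INR m). f_equal. ring. }
  assert (Ha : forall j, (j < N)%nat -> sumR (S N) (fun m => a m / INR (S (m + (2 * j + e)))) = 0).
  { intros j Hj.
    assert (H := symmetric_poly_moment g a (S N) ((-1) ^ e) (2 * j + e) 0 Hg Hpar).
    rewrite neg1_pow_even_add, neg1_pow_sq in H. specialize (H eq_refl (Hmom j Hj)). lra. }
  assert (Hcoef : forall m, (m <= N)%nat -> a m = a N / r N * r m).
  { apply (cauchy_solutions_proportional N a r shift).
    - intros j. unfold shift. pose proof (pos_INR (2 * j + e)). lra.
    - intros i j _ _ Hij. unfold shift in Hij.
      apply Rplus_eq_reg_r, INR_eq in Hij. lia.
    - exact HrN.
    - exact (Hcauchy a Ha).
    - exact (Hcauchy r Hr). }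
  assert (Hgc : forall x, 0 < x < 1 -> g x = a N / r N * sumR (S N) (fun m => r m * x ^ m)).
  { intros x Hx. rewrite Hg, <- sumR_scal by exact Hx. apply sumR_ext; intros m Hm.
    rewrite (Hcoef m) by lia. ring. }
  destruct (symmetric_normalization g _ (a N / r N) ((-1) ^ e) Hgc Hpar (neg1_pow_sq e)
              (ex_derive_poly r (S N)) Hnorm) as [I [HI Hc]].
  exists (a N / r N), I. split; [exact HI|]. split; [exact Hc|exact Hgc].
Qed.

Theorem mainTheorem4 (n : nat) (f : nat -> R -> R) :
  (1 <= n)%nat -> Alpert n f ->
  (exists c I : R,
      RInt_eq (fun x => (p_poly (n - 1) x) ^ 2) 0 1 I /\
      / (c ^ 2) = 2 * I /\
      forall x, 0 < x < 1 -> f n x = c * p_poly (n - 1) x) /\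
  ((2 <= n)%nat ->
   exists d I : R,
      RInt_eq (fun x => (q_poly (n - 1) x) ^ 2) 0 1 I /\
      / (d ^ 2) = 2 * I /\
      forall x, 0 < x < 1 -> f (n - 1)%nat x = d * q_poly (n - 1) x).
Proof.
  intros Hn [_ [Hpoly [Hsym [Horth Hmom]]]].
  destruct n as [|N]; [lia|]. replace (S N - 1)%nat with N by lia.
  assert (Hnorm : forall k, (1 <= k <= S N)%nat -> RInt_eq (fun t => f k t * f k t) (-1) 1 1).
  { intros k Hk. specialize (Horth k k Hk Hk). rewrite Nat.eqb_refl in Horth. exact Horth. }
  split.
  - destruct (Hpoly (S N) ltac:(lia)) as [a Ha].
    apply (symmetric_profile N 1 _ a (p_coef N) Ha).
    + intros t Ht. rewrite Hsym by (lia || exact Ht).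
      replace (S N + S N - 1)%nat with (2 * N + 1)%nat by lia.
      rewrite neg1_pow_even_add. reflexivity.
    + intros j Hj. apply Hmom; lia.
    + apply Hnorm; lia.
    + apply p_coef_lead.
    + apply p_coef_moment.
  - intros HN. destruct N as [|N]; [lia|].
    destruct (Hpoly (S N) ltac:(lia)) as [a Ha].
    apply (symmetric_profile (S N) 0 _ a (q_coef (S N)) Ha).
    + intros t Ht. rewrite Hsym by (lia || exact Ht).
      replace (S N + S (S N) - 1)%nat with (2 * S N + 0)%nat by lia.
      rewrite neg1_pow_even_add. reflexivity.
    + intros j Hj. apply Hmom; lia.
    + apply Hnorm; lia.
    + apply q_coef_lead.
    + intros j Hj. rewrite Nat.add_0_r. apply q_coef_moment, Hj.
Qed.
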